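(* Let $(\mathcal{Z},d_\mathcal{Z})$ be a metric space and $\mathcal{F}$ a class of functions $f:\mathcal{Z}\to\mathbb{R}$. The following are equivalent: (i) for every $f\in\mathcal{F}$ and every $z\in\mathcal{Z}$ there exists a constant $\lambda$ such that $f(z')-f(z)\le\lambda\, d_\mathcal{Z}(z,z')$ for all $z'\in\mathcal{Z}$; (ii) for every $f\in\mathcal{F}$ and every empirical distribution $P_n$ on $\mathcal{Z}$, the set $\{\lambda:\psi_{f,P_n}(\lambda)=0\}$ is nonempty, where $\psi_{f,P_n}(\lambda):=\mathbb{E}_{z\sim P_n}\big(\sup_{z'\in\mathcal{Z}}\{f(z')-\lambda d_\mathcal{Z}(z,z')-f(z)\}\big)$.
   Context: An empirical distribution $P_n$ is the uniform distribution on finitely many points $z_1,\dots,z_n\in\mathcal{Z}$. *)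

From HB Require Import structures.
From mathcomp Require Import all_boot all_order all_algebra.
From mathcomp Require Import all_classical all_reals ereal.
Set Implicit Arguments. Unset Strict Implicit. Unset Printing Implicit Defensive.
Import Order.TTheory GRing.Theory Num.Theory.
Local Open Scope ring_scope.
Local Open Scope classical_set_scope.

Definition is_metric (R : realType) (Z : Type) (d : Z -> Z -> R) : Prop :=
  [/\ forall x y, 0 <= d x y,
      forall x y, d x y = 0 <-> x = y,
      forall x y, d x y = d y x &
      forall x y z, d x z <= d x y + d y z].

Definition inner_sup (R : realType) (Z : Type) (d : Z -> Z -> R)
    (f : Z -> R) (l : R) (z : Z) : \bar R :=
  ereal_sup (range (fun z' => (f z' - l * d z z' - f z)%:E)).

(* psi_{f,P_n}(l) for the empirical distribution P_n uniform on the
   points zs 0, ..., zs (n-1) (repetitions allowed, n > 0) *)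
Definition psi (R : realType) (Z : Type) (d : Z -> Z -> R)
    (f : Z -> R) (n : nat) (zs : 'I_n -> Z) (l : R) : \bar R :=
  ((n%:R)^-1)%:E * (\sum_(i < n) inner_sup d f l (zs i))%E.

From HB Require Import structures.
From mathcomp Require Import all_boot all_order all_algebra.
From mathcomp Require Import all_classical all_reals ereal.
From mathcomp Require Import lra.
Set Implicit Arguments. Unset Strict Implicit. Unset Printing Implicit Defensive.
Import Order.TTheory GRing.Theory Num.Theory.
Local Open Scope ring_scope.
Local Open Scope classical_set_scope.

(* Because d z z = 0, the choice z' = z makes every inner supremum
   nonnegative, and it is 0 exactly when l bounds the slopes of f out of z.
   Hence a slope bound at each of the finitely many sample points (their
   maximum serves for all of them) makes psi vanish, while the one-point
   empirical distribution at z turns a zero of psi into a slope bound at z. *)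

Section InnerSup.
Variables (R : realType) (Z : Type) (d : Z -> Z -> R) (f : Z -> R).

Let excess l z z' : R := f z' - l * d z z' - f z.

Lemma inner_sup_ge0 l z : d z z = 0 -> (0 <= inner_sup d f l z)%E.
Proof.
move=> dzz.
apply: le_trans (ereal_sup_ubound (imageT (fun z' => (excess l z z')%:E) z)).
by rewrite lee_fin /excess dzz mulr0 subr0 subrr.
Qed.

Lemma inner_sup_eq0P l z : d z z = 0 ->
  inner_sup d f l z = 0%E <-> (forall z', f z' - f z <= l * d z z').
Proof.
move=> dzz; split=> [sup0 z' | slope].
  have := ereal_sup_ubound (imageT (fun z'' => (excess l z z'')%:E) z').
  rewrite -/(inner_sup d f l z) sup0 lee_fin /excess; lra.
apply/eqP; rewrite eq_le inner_sup_ge0 // andbT.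
by apply: ge_ereal_sup => _ [z' _ <-]; rewrite lee_fin; have := slope z'; lra.
Qed.

Lemma psi_const1 l z : psi d f (fun _ : 'I_1 => z) l = inner_sup d f l z.
Proof. by rewrite /psi big_ord1 invr1 mul1e. Qed.

Lemma psi_eq0 n (zs : 'I_n -> Z) l :
  (forall i, inner_sup d f l (zs i) = 0%E) -> psi d f zs l = 0%E.
Proof. by move=> sup0; rewrite /psi big1 ?mule0. Qed.

Lemma slope_bound_le z l l' :
  (forall z', 0 <= d z z') -> l <= l' ->
  (forall z', f z' - f z <= l * d z z') -> forall z', f z' - f z <= l' * d z z'.
Proof.
by move=> d_ge0 le_ll' slope z'; apply: le_trans (slope z') (ler_wpM2r _ _).
Qed.

End InnerSup.

Theorem lemma3 (R : realType) (Z : Type) (d : Z -> Z -> R)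
  (hd : is_metric d) (F : set (Z -> R)) :
  (forall f, F f -> forall z : Z, exists l : R,
      forall z' : Z, f z' - f z <= l * d z z')
  <->
  (forall f, F f -> forall (n : nat) (zs : 'I_n -> Z), (0 < n)%N ->
      exists l : R, psi d f zs l = 0%E).
Proof.
case: hd => d_ge0 d_eq0 _ _; have dzz z : d z z = 0 by apply/d_eq0.
split=> [slope f Ff n zs _ | psi0 f Ff z].
- have [L slopeL] := choice (fun i => slope f Ff (zs i)).
  exists (\big[Num.max/0]_i L i); apply: psi_eq0 => i.
  apply/inner_sup_eq0P => //; apply: slope_bound_le (slopeL i) => //.
  exact: le_bigmax.
- have [l psi_l] := psi0 f Ff 1%N (fun _ => z) isT.
  rewrite psi_const1 in psi_l.
  by exists l; apply/(inner_sup_eq0P _ _ (dzz z)).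
Qed.
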